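(* Let $\mathbb{F}$ be a field of characteristic $2$. The voltage assignment $\ell$ on $\widetilde H_3(\mathbb{F})$ is reductive, i.e. for all vertices $u,v,w$ of $\widetilde H_3(\mathbb{F})$ with $u\sim v$ and $v\perp w$ we have $\ell(w,u)=\ell(w,v)$.
   Context: Let $V=\mathbb{F}^4$, $V^*$ its dual. $\widetilde H_3(\mathbb{F})$ is the graph whose vertices are tensors $v\otimes f\in V\otimes V^*$ with $f(v)\neq0$, with $v\otimes f\perp w\otimes g$ iff $f(w)=g(v)=0$; $u\sim v$ means $u,v$ have the same neighbours. Let $W=\bigwedge^2V$, fix an isomorphism $\chi:\bigwedge^4V\to\mathbb{F}$, identify $\bigwedge^2V^*$ with $(\bigwedge^2V)^*$ via $(f_1\wedge f_2)(v_1\wedge v_2)=f_1(v_1)f_2(v_2)-f_1(v_2)f_2(v_1)$, let $\psi:\bigwedge^2V\to\bigwedge^2V^*$ be $\psi(\hat w)(\hat v)=\chi(\hat v\wedge\hat w)$ and $\phi=\psi^{-1}$. $S_2(W)$ is the symmetric square of $W$ (product $ab$). $\ell$ assigns to the dart from $v_1\otimes h_1$ to $v_2\otimes h_2$ the element $h_1(v_1)^{-1}h_2(v_2)^{-1}(v_1\wedge v_2)\,\phi(h_1\wedge h_2)$ of the additive group $S_2(W)$. *)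

From HB Require Import structures.
From mathcomp Require Import all_boot all_order all_algebra.
From mathcomp Require Import mpoly.
Set Implicit Arguments. Unset Strict Implicit. Unset Printing Implicit Defensive.
Import GRing.Theory.
Local Open Scope ring_scope.

Section H3.
Variable F : fieldType.

(* V = F^4 (row vectors), V^* = F^4 via the dual basis. *)
Definition vec := 'rV[F]_4.
Definition covec := 'rV[F]_4.
Definition ev (f : covec) (v : vec) : F := \sum_(i < 4) f 0 i * v 0 i.

(* A vertex v (x) f is represented by a pair (v, f) with f(v) <> 0;
   all notions below are invariant under (v,f) |-> (a v, a^-1 f). *)
Definition vertex := (vec * covec)%type.
Definition is_vertex (x : vertex) : Prop := ev x.2 x.1 != 0.

Definition perp (x y : vertex) : Prop := ev x.2 y.1 = 0 /\ ev y.2 x.1 = 0.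

Definition same_nbrs (x y : vertex) : Prop :=
  forall z : vertex, is_vertex z -> (perp x z <-> perp y z).

(* The basis of /\^2 F^4 : e_(pi1 P) /\ e_(pi2 P), for the six pairs
   (0,1),(0,2),(0,3),(1,2),(1,3),(2,3). *)
Definition pi1 (P : 'I_6) : 'I_4 := inord (nth 0%N [:: 0; 0; 0; 1; 1; 2]%N P).
Definition pi2 (P : 'I_6) : 'I_4 := inord (nth 0%N [:: 1; 2; 3; 2; 3; 3]%N P).

(* W = /\^2 V  ~=  F^6 ; a /\ b in coordinates (Pluecker coordinates).
   Applied to covectors, this gives h1 /\ h2 in /\^2 V^*, whose coordinates
   are exactly its values (h1/\h2)(e_i/\e_j) = h1(e_i)h2(e_j) - h1(e_j)h2(e_i),
   i.e. /\^2 V^* is identified with (/\^2 V)^* as in the paper. *)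
Definition wedge2 (a b : 'rV[F]_4) : 'rV[F]_6 :=
  \row_P (a 0 (pi1 P) * b 0 (pi2 P) - a 0 (pi2 P) * b 0 (pi1 P)).

Definition rows4 (a b c d : 'I_4) : 'M[F]_4 :=
  \matrix_(r < 4, s < 4) ((s == nth a [:: a; b; c; d] r)%:R).

(* chi : /\^4 V -> F, an isomorphism, is  chi = k * det  with k <> 0:
   chi(e_a /\ e_b /\ e_c /\ e_d) = k * det(rows4 a b c d). *)
Definition chi4 (k : F) (a b c d : 'I_4) : F := k * \det (rows4 a b c d).

(* Matrix of psi : W -> W^* (row-vector convention, W^* in the dual basis):
   psi(w)(e_P) = chi(e_P /\ w), so (psiMat)_{Q,P} = chi(e_P /\ e_Q). *)
Definition psiMat (k : F) : 'M[F]_6 :=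
  \matrix_(Q < 6, P < 6) chi4 k (pi1 P) (pi2 P) (pi1 Q) (pi2 Q).
Definition psi (k : F) (w : 'rV[F]_6) : 'rV[F]_6 := w *m psiMat k.
Definition phi (k : F) (g : 'rV[F]_6) : 'rV[F]_6 := g *m invmx (psiMat k).

(* S_2(W): the degree-2 part of the symmetric algebra of W, realised as
   polynomials in 6 variables (W = linear forms); the product ab in S_2(W)
   is the product of polynomials. *)
Definition linform (a : 'rV[F]_6) : {mpoly F[6]} := \sum_(i < 6) a 0 i *: 'X_i.
Definition sym2 (a b : 'rV[F]_6) : {mpoly F[6]} := linform a * linform b.

Definition ell (k : F) (x y : vertex) : {mpoly F[6]} :=
  ((ev x.2 x.1)^-1 * (ev y.2 y.1)^-1) *:
    sym2 (wedge2 x.1 y.1) (phi k (wedge2 x.2 y.2)).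

End H3.

(* Two vertices with the same neighbours are rescalings of each other: if
   [x (x) f] and [y (x) g] have the same neighbours, every [w] in the kernel of
   [f] lies in the kernel of [g] (complete [w] to a vertex [w (x) d] orthogonal
   to [x (x) f]), so [g] is a multiple of [f], and dually [y] is a multiple of
   [x].  The voltage [ell] is invariant under [(x, f) |-> (t x, s f)], since the
   normalising factor [f(x)^-1] absorbs the bilinear dependence of
   [(x /\ _) phi(f /\ _)] on [(x, f)]. *)
From HB Require Import structures.
From mathcomp Require Import all_boot all_order all_algebra.
From mathcomp Require Import mpoly.
From mathcomp Require Import ring.
Set Implicit Arguments. Unset Strict Implicit. Unset Printing Implicit Defensive.
Import GRing.Theory.
Local Open Scope ring_scope.

Section Pairing.
Variable F : fieldType.
Implicit Types a b c d : 'rV[F]_4.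

Lemma evC a b : ev a b = ev b a.
Proof. by apply: eq_bigr => i _; rewrite mulrC. Qed.

Lemma evZl s a b : ev (s *: a) b = s * ev a b.
Proof. by rewrite /ev mulr_sumr; apply: eq_bigr => i _; rewrite mxE mulrA. Qed.

Lemma evZr s a b : ev a (s *: b) = s * ev a b.
Proof. by rewrite evC evZl evC. Qed.

Lemma evBl a b c : ev (a - b) c = ev a c - ev b c.
Proof. by rewrite /ev -sumrB; apply: eq_bigr => i _; rewrite !mxE mulrBl. Qed.

Lemma ev0r a : ev a 0 = 0.
Proof. by rewrite /ev big1 // => i _; rewrite mxE mulr0. Qed.

Lemma ev_delta_mx a (l : 'I_4) : ev (delta_mx 0 l) a = a 0 l.
Proof.
rewrite /ev (bigD1 l) //= big1 ?addr0 => [|j /negPf njl].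
  by rewrite !mxE !eqxx mul1r.
by rewrite !mxE njl andbF mul0r.
Qed.

Lemma ev_separates {a b c} : ev a b != 0 -> c != (ev a c / ev a b) *: b ->
  exists d, ev d b = 0 /\ ev d c != 0.
Proof.
move=> nz_ab; set s := ev a c / ev a b => neq_c.
have [l neq_cl] : exists l, c 0 l != (s *: b) 0 l.
  apply/existsP; apply: contraR neq_c => /existsPn eq_c.
  by apply/eqP/rowP => l; apply/eqP/negPn/eq_c.
exists (ev a b *: delta_mx 0 l - b 0 l *: a).
rewrite !evBl !evZl !ev_delta_mx; split; first by rewrite mulrC subrr.
have -> : ev a b * c 0 l - b 0 l * ev a c = ev a b * (c 0 l - (s *: b) 0 l).
  by rewrite mxE /s; field.
by rewrite mulf_neq0 // subr_eq0.
Qed.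

Lemma ev_ker_sub_scale {a b c} : ev a b != 0 ->
  (forall d, ev d b = 0 -> ev d c = 0) -> c = (ev a c / ev a b) *: b.
Proof.
move=> nz_ab ker_bc; apply/eqP; apply: contraT => /(ev_separates nz_ab).
by case=> d [/ker_bc ->]; rewrite eqxx.
Qed.

End Pairing.

Section Neighbours.
Variable F : fieldType.
Implicit Types u v : vertex F.

Definition dual u : vertex F := (u.2, u.1).

Lemma is_vertex_dual u : is_vertex (dual u) <-> is_vertex u.
Proof. by rewrite /is_vertex evC. Qed.

Lemma perp_dual u v : perp (dual u) (dual v) <-> perp u v.
Proof. by rewrite /perp /= (evC u.1) (evC v.1); split=> -[]. Qed.

Lemma same_nbrs_dual u v : same_nbrs u v -> same_nbrs (dual u) (dual v).
Proof.
move=> uv [x f] /is_vertex_dual/uv.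
by rewrite -[(x, f)]/(dual (f, x)) !perp_dual.
Qed.

Lemma same_nbrs_ker u v : is_vertex u -> same_nbrs u v ->
  forall w, ev u.2 w = 0 -> ev v.2 w = 0.
Proof.
move=> u_vx uv w uw; have [->|nz_w] := eqVneq w 0; first exact: ev0r.
have [d [du dw]] : exists d, ev d u.1 = 0 /\ ev d w != 0.
  by apply: ev_separates u_vx _; rewrite uw mul0r scale0r.
by have /uv[/(_ (conj uw du)) []] : is_vertex (w, d).
Qed.

Lemma same_nbrs_covec_scale u v : is_vertex u -> same_nbrs u v ->
  v.2 = (ev u.1 v.2 / ev u.1 u.2) *: u.2.
Proof.
move=> u_vx uv; apply: ev_ker_sub_scale; first by rewrite evC.
by move=> d; rewrite !(evC d); apply: same_nbrs_ker.
Qed.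

Lemma same_nbrs_scale u v : is_vertex u -> same_nbrs u v ->
  exists s t, v = (t *: u.1, s *: u.2).
Proof.
move=> u_vx uv; exists (ev u.1 v.2 / ev u.1 u.2), (ev u.2 v.1 / ev u.2 u.1).
have := same_nbrs_covec_scale u_vx uv.
have dual_u_vx : is_vertex (dual u) by apply/is_vertex_dual.
have := same_nbrs_covec_scale dual_u_vx (same_nbrs_dual uv).
by case: v {uv} => y g /= <- <-.
Qed.

End Neighbours.

Section Voltage.
Variable F : fieldType.

Lemma wedge2Zr (a b : 'rV[F]_4) t : wedge2 a (t *: b) = t *: wedge2 a b.
Proof. by apply/rowP => P; rewrite !mxE; ring. Qed.

Lemma phiZ k t (g : 'rV[F]_6) : phi k (t *: g) = t *: phi k g.
Proof. by rewrite /phi -scalemxAl. Qed.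

Lemma linformZ t (a : 'rV[F]_6) : linform (t *: a) = t *: linform a.
Proof.
by rewrite /linform scaler_sumr; apply: eq_bigr => i _; rewrite mxE scalerA.
Qed.

Lemma sym2Z s t (a b : 'rV[F]_6) : sym2 (s *: a) (t *: b) = (s * t) *: sym2 a b.
Proof. by rewrite /sym2 !linformZ -scalerAl -scalerAr scalerA. Qed.

Lemma ell_scale k (w u : vertex F) s t : is_vertex (t *: u.1, s *: u.2) ->
  ell k w (t *: u.1, s *: u.2) = ell k w u.
Proof.
rewrite /is_vertex /= evZl evZr !mulf_eq0 !negb_or => /and3P[nz_s nz_t u_vx].
rewrite /ell /= evZl evZr !wedge2Zr phiZ sym2Z scalerA.
congr (_ *: _); rewrite -mulrA; congr (_ * _).
by rewrite [s * _]mulrA (mulrC t s) invfM mulrAC mulVf ?mulf_neq0 // mul1r.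
Qed.

End Voltage.

Theorem lemma3p7 (F : fieldType) (k : F) :
  2%N \in [pchar F] -> k != 0 ->
  forall u v w : vertex F,
    is_vertex u -> is_vertex v -> is_vertex w ->
    same_nbrs u v -> perp v w ->
    ell k w u = ell k w v.
Proof.
move=> _ _ u v w u_vx v_vx _ uv _.
have [s [t v_scale]] := same_nbrs_scale u_vx uv.
by rewrite v_scale ell_scale // -v_scale.
Qed.
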